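(* Let $L\subset\mathbb{C}$ be a single slit domain, i.e. the complex plane minus a single slit lying on the negative real axis. Let $f=h+\overline{g}\in\mathcal{S}_H^0$ map $\mathbb{D}$ onto $L$, satisfy $h(z)-g(z)=\frac{z}{(1-z)^2}$ for $z\in\mathbb{D}$, and have dilatation $\omega=g'/h'=b^2$ with $b(z)=\varepsilon z$, $\varepsilon\in\{1,-1\}$. Let $S$ be the minimal surface over $L$ with projection $f$, i.e. $S=\{(u(z),v(z),F(z)):z\in\mathbb{D}\}$ with $u=\mathrm{Re}\,f$, $v=\mathrm{Im}\,f$, $F(z)=\mathrm{Re}\int_0^z2ib(t)h'(t)\,dt+c$, $c\in\mathbb{R}$. Then $$u=\mathrm{Re}\left(\frac{2z^3-3z^2+3z}{3(1-z)^3}\right),\qquad v=\mathrm{Im}\left(\frac{z}{(1-z)^2}\right),\qquad F=\pm\mathrm{Im}\left(\frac{1}{(z-1)^2}+\frac{2}{3(z-1)^3}\right)+c,$$ where the sign $\pm$ corresponds to $\varepsilon$ and $c$ is a real constant.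
   Context: $\mathbb{D}$ is the unit disk. A harmonic mapping $f=h+\overline g$ ($h,g$ analytic on $\mathbb{D}$) is sense-preserving if $h'\ne0$ and its dilatation $\omega=g'/h'$ satisfies $|\omega|<1$. $\mathcal{S}_H^0$ is the class of sense-preserving univalent harmonic mappings $f=h+\overline g$ on $\mathbb{D}$ with $h(0)=g(0)=0$, $h'(0)=1$, $g'(0)=0$. Minimal surface with projection $f$ (Weierstrass–Enneper): $S=\{(\mathrm{Re}\int_0^z\phi_1+c_1,\mathrm{Re}\int_0^z\phi_2+c_2,\mathrm{Re}\int_0^z\phi_3+c_3)\}$ with $\phi_j$ analytic, $\phi_1^2+\phi_2^2+\phi_3^2=0$, $f=\mathrm{Re}\int_0^z\phi_1+i\,\mathrm{Re}\int_0^z\phi_2$ univalent sense-preserving harmonic onto the domain; for $\omega=b^2$, $b(z)=\pm z$, one has $\phi_1=h'+g'$, $\phi_2=-i(h'-g')$, $\phi_3=2ibh'$. *)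

From Stdlib Require Import Reals.
From Coquelicot Require Import Coquelicot.
Open Scope R_scope.

Definition unit_disk (z : C) : Prop := Cmod z < 1.

Definition has_cderiv (f : C -> C) (z l : C) : Prop :=
  @is_derive C_AbsRing C_NormedModule f z l.

(* Path integral of phi along the segment [0, z]:
   int_0^z phi(t) dt = int_0^1 phi(s z) z ds. *)
Definition seg_int0 (phi : C -> C) (z : C) : C :=
  @RInt C_R_CompleteNormedModule (fun s : R => Cmult (phi (RtoC s * z)%C) z) 0 1.

Definition single_slit_domain (L : C -> Prop) : Prop :=
  exists a : R, a < 0 /\
    forall w : C, L w <-> ~ (Im w = 0 /\ Re w <= a).

Definition in_SH0 (h g dh dg : C -> C) : Prop :=
  (forall z, unit_disk z -> has_cderiv h z (dh z) /\ has_cderiv g z (dg z)) /\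
  h 0%R = 0%R /\ g 0%R = 0%R /\ dh 0%R = 1%R /\ dg 0%R = 0%R /\
  (forall z, unit_disk z -> dh z <> 0%R /\ Cmod (dg z / dh z)%C < 1) /\
  (forall z1 z2, unit_disk z1 -> unit_disk z2 ->
     (h z1 + Cconj (g z1))%C = (h z2 + Cconj (g z2))%C -> z1 = z2).

From Stdlib Require Import Reals Lra.
From Coquelicot Require Import Coquelicot.
Open Scope R_scope.

(* Differentiating the shear relation h - g = k, where k(z) = z / (1 - z)^2 is
   the Koebe function, and inserting g' = z^2 h' gives (1 - z^2) h' = k', that is
   h' = 1 / (1 - z)^4.  Integrating along [0, z] gives h explicitly, hence
   g = h - k and f = h + conj g; integrating 2 i eps t h'(t) gives the height F. *)

Notation is_Cderive f x l := (@is_derive C_AbsRing (AbsRing_NormedModule C_AbsRing) f x l).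
Notation ex_Cderive f x := (@ex_derive C_AbsRing (AbsRing_NormedModule C_AbsRing) f x).

Lemma is_derive_eps {K : AbsRing} {V : NormedModule K} (f : K -> V) (x : K) (l : V) :
  is_derive f x l <->
  (forall eps : posreal, exists delta : posreal, forall y : K,
     norm (minus y x) < delta ->
     norm (minus (minus (f y) (f x)) (scal (minus y x) l)) <= eps * norm (minus y x)).
Proof.
split.
- intros [_ Hdiff] eps.
  destruct (Hdiff x (fun P HP => HP) eps) as [delta Hdelta].
  exists delta; intros y Hy; exact (Hdelta y Hy).
- intros Heps; split; [apply is_linear_scal_l|].
  intros x' Hx'.
  apply (@is_filter_lim_locally_unique K (AbsRing_NormedModule K)) in Hx'; subst x'.
  intros eps; destruct (Heps eps) as [delta Hdelta].
  exists delta; intros y Hy; exact (Hdelta y Hy).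
Qed.

(* [has_cderiv] is stated in [C_NormedModule], while Coquelicot's product rule
   needs [AbsRing_NormedModule C_AbsRing]; the two structures share their norm. *)
Lemma has_cderivE (f : C -> C) (z l : C) : has_cderiv f z l <-> is_Cderive f z l.
Proof. unfold has_cderiv; rewrite !is_derive_eps; reflexivity. Qed.

Lemma is_Cderive_unique (f : C -> C) (z l1 l2 : C) :
  is_Cderive f z l1 -> is_Cderive f z l2 -> l1 = l2.
Proof.
intros H1%has_cderivE%is_C_derive_unique H2%has_cderivE%is_C_derive_unique.
congruence.
Qed.

Lemma Cmod_sub_ge (a b : C) : Cmod a - Cmod b <= Cmod (a - b).
Proof.
pose proof (Cmod_triangle (a - b) b) as T.
replace (a - b + b)%C with a in T by ring; lra.
Qed.

Lemma is_Cderive_Cinv (w : C) : w <> 0%C -> is_Cderive Cinv w (- / (w * w))%C.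
Proof.
intros Hw; apply is_derive_eps; intros eps.
set (r := Cmod w).
assert (Hr : 0 < r) by now apply Cmod_gt_0.
pose proof (cond_pos eps) as Heps.
assert (Hdelta : 0 < Rmin (r / 2) (eps * (r * r * r) / 2)).
{ apply Rmin_pos; [lra|]. assert (0 < r * r * r) by (repeat apply Rmult_lt_0_compat; lra). nra. }
exists (mkposreal _ Hdelta); intros y Hy.
change (Cmod (y - w) < Rmin (r / 2) (eps * (r * r * r) / 2)) in Hy.
change (Cmod (/ y - / w - (y - w) * (- / (w * w))) <= eps * Cmod (y - w)).
set (m := Cmod (y - w)) in *.
pose proof (Rmin_l (r / 2) (eps * (r * r * r) / 2)).
pose proof (Rmin_r (r / 2) (eps * (r * r * r) / 2)).
assert (Hy_large : r / 2 < Cmod y).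
{ pose proof (Cmod_sub_ge w y) as T.
  replace (w - y)%C with (- (y - w))%C in T by ring. rewrite Cmod_opp in T. fold r m in T. lra. }
assert (Hy0 : (y : C) <> 0%C) by (intros E; rewrite E, Cmod_0 in Hy_large; lra).
replace (/ y - / w - (y - w) * (- / (w * w)))%C with ((y - w) * (y - w) / (y * (w * w)))%C
  by (field; now split).
unfold Cdiv; rewrite !Cmod_mult, Cmod_inv, !Cmod_mult by (now repeat apply Cmult_neq_0).
fold r m. set (q := Cmod y) in *.
assert (0 <= m) by apply Cmod_ge_0.
assert (r * r * r / 2 <= q * (r * r)) by (assert (0 < r * r) by nra; nra).
assert (m * m <= eps * m * (r * r * r / 2)) by nra.
apply (Rmult_le_reg_r (q * (r * r))); [nra|].
replace (m * m * / (q * (r * r)) * (q * (r * r))) with (m * m) by (field; split; lra).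
assert (0 <= eps * m) by nra. nra.
Qed.

Section ComplexDerivativeRules.

Variables (f g : C -> C) (x df dg : C).
Hypotheses (Hf : is_Cderive f x df) (Hg : is_Cderive g x dg).

Lemma is_Cderive_plus : is_Cderive (fun y => f y + g y)%C x (df + dg)%C.
Proof. exact (is_derive_plus (K := C_AbsRing) (V := AbsRing_NormedModule C_AbsRing) f g x df dg Hf Hg). Qed.

Lemma is_Cderive_minus : is_Cderive (fun y => f y - g y)%C x (df - dg)%C.
Proof. exact (is_derive_minus (K := C_AbsRing) (V := AbsRing_NormedModule C_AbsRing) f g x df dg Hf Hg). Qed.

Lemma is_Cderive_mult : is_Cderive (fun y => f y * g y)%C x (df * g x + f x * dg)%C.
Proof. exact (is_derive_mult (K := C_AbsRing) f g x df dg Hf Hg Cmult_comm). Qed.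

Lemma is_Cderive_inv : f x <> 0%C -> is_Cderive (fun y => / f y)%C x (- df / (f x * f x))%C.
Proof.
intros Hfx.
replace (- df / (f x * f x))%C with (df * (- / (f x * f x)))%C by (field; exact Hfx).
exact (is_derive_comp (K := C_AbsRing) (V := AbsRing_NormedModule C_AbsRing) Cinv f x _ df (is_Cderive_Cinv (f x) Hfx) Hf).
Qed.

End ComplexDerivativeRules.

Lemma is_Cderive_id (x : C) : is_Cderive (fun y => y) x (RtoC 1).
Proof. exact (is_derive_id (K := C_AbsRing) x). Qed.

Lemma is_Cderive_const (a x : C) : is_Cderive (fun _ => a) x (RtoC 0).
Proof. exact (is_derive_const (K := C_AbsRing) (V := AbsRing_NormedModule C_AbsRing) a x). Qed.

Lemma is_Cderive_eq (f : C -> C) (x l l' : C) : is_Cderive f x l -> l = l' -> is_Cderive f x l'.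
Proof. now intros H <-. Qed.

Ltac auto_Cderive_step :=
  lazymatch goal with
  | |- is_Cderive (fun y => Cmult (@?f y) (@?g y)) _ _ => apply (is_Cderive_mult f g)
  | |- is_Cderive (fun y => Cminus (@?f y) (@?g y)) _ _ => apply (is_Cderive_minus f g)
  | |- is_Cderive (fun y => Cplus (@?f y) (Copp (@?g y))) _ _ => apply (is_Cderive_minus f g)
  | |- is_Cderive (fun y => Cplus (@?f y) (@?g y)) _ _ => apply (is_Cderive_plus f g)
  | |- is_Cderive (fun y => Cinv (@?f y)) _ _ => apply (is_Cderive_inv f)
  | |- is_Cderive (fun y => y) _ _ => apply is_Cderive_id
  | |- is_Cderive (fun _ => _) _ _ => apply is_Cderive_const
  end.

(* Leaves the non-vanishing conditions of the quotient rule as goals. *)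
Ltac auto_Cderive :=
  unfold Cdiv; cbn [Cpow];
  repeat (first [eassumption | auto_Cderive_step]; cbv beta).

Lemma C_R_scal (r : R) (a : C) : @scal _ C_R_NormedModule r a = (RtoC r * a)%C.
Proof.
destruct a as [a1 a2]; apply injective_projections; simpl;
  unfold scal; simpl; unfold mult; simpl; ring.
Qed.

Lemma C_R_norm (a : C) : @norm _ C_R_NormedModule a = Cmod a.
Proof. symmetry; apply Cmod_norm. Qed.

Lemma is_derive_along_ray (f : C -> C) (b : C) (s : R) (l : C) :
  is_Cderive f (RtoC s * b)%C l ->
  @is_derive R_AbsRing C_R_NormedModule (fun t => f (RtoC t * b)%C) s (l * b)%C.
Proof.
rewrite !is_derive_eps; intros Hf eps.
set (k := Cmod b + 1).
assert (Hk : 0 < k) by (pose proof (Cmod_ge_0 b); unfold k; lra).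
pose proof (cond_pos eps) as Heps.
destruct (Hf (mkposreal (eps / k) (Rdiv_lt_0_compat _ _ Heps Hk))) as [d Hd]; simpl in Hd.
exists (mkposreal (d / k) (Rdiv_lt_0_compat _ _ (cond_pos d) Hk)); simpl.
intros t Ht; change (Rabs (t - s) < d / k) in Ht.
rewrite C_R_scal, C_R_norm.
change (Cmod (f (RtoC t * b) - f (RtoC s * b) - RtoC (t - s) * (l * b))%C <= eps * Rabs (t - s)).
specialize (Hd (RtoC t * b)%C).
change (Cmod (RtoC t * b - RtoC s * b)%C < d ->
  Cmod (f (RtoC t * b) - f (RtoC s * b) - (RtoC t * b - RtoC s * b) * l)%C
  <= eps / k * Cmod (RtoC t * b - RtoC s * b)%C) in Hd.
replace (RtoC t * b - RtoC s * b)%C with (RtoC (t - s) * b)%C in Hd by (rewrite RtoC_minus; ring).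
replace (RtoC (t - s) * (l * b))%C with (RtoC (t - s) * b * l)%C by ring.
rewrite Cmod_mult, Cmod_R in Hd.
pose proof (Rabs_pos (t - s)). pose proof (Cmod_ge_0 b).
assert (Htb : Rabs (t - s) * Cmod b <= Rabs (t - s) * k) by (unfold k; nra).
eapply Rle_trans; [apply Hd|].
- apply (Rle_lt_trans _ _ _ Htb).
  apply (Rmult_lt_reg_r (/ k)); [now apply Rinv_0_lt_compat|].
  replace (Rabs (t - s) * k * / k) with (Rabs (t - s)) by (field; lra). exact Ht.
- apply (Rle_trans _ (eps / k * (Rabs (t - s) * k))).
  + apply Rmult_le_compat_l; [|exact Htb]. apply Rlt_le, Rdiv_lt_0_compat; lra.
  + right; field; lra.
Qed.

Lemma unit_disk_scal (z : C) (s : R) : unit_disk z -> 0 <= s <= 1 -> unit_disk (RtoC s * z)%C.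
Proof.
unfold unit_disk; intros Hz Hs.
rewrite Cmod_mult, Cmod_R, Rabs_right by lra.
pose proof (Cmod_ge_0 z); nra.
Qed.

Lemma unit_disk_locally (w : C) : unit_disk w -> @locally (AbsRing_UniformSpace C_AbsRing) w unit_disk.
Proof.
unfold unit_disk; intros Hw.
assert (Hr : 0 < 1 - Cmod w) by lra.
exists (mkposreal _ Hr); intros y Hy; change C in y.
change (Cmod (y - w) < 1 - Cmod w) in Hy.
pose proof (Cmod_triangle (y - w) w) as T.
replace (y - w + w)%C with (y : C) in T by ring; lra.
Qed.

Lemma unit_disk_neq (w u : C) : unit_disk w -> Cmod u = 1 -> w <> u.
Proof. unfold unit_disk; intros Hw Hu ->; lra. Qed.

Lemma unit_disk_1_sub_neq0 (w : C) : unit_disk w -> (1 - w)%C <> 0%C.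
Proof.
intros Hw E; apply (unit_disk_neq w 1 Hw); [apply Cmod_1|].
replace w with (1 - (1 - w))%C by ring; rewrite E; ring.
Qed.

Lemma unit_disk_sub_1_neq0 (w : C) : unit_disk w -> (w - 1)%C <> 0%C.
Proof.
intros Hw E; apply (unit_disk_1_sub_neq0 w Hw).
replace (1 - w)%C with (- (w - 1))%C by ring; rewrite E; ring.
Qed.

Lemma unit_disk_1_add_neq0 (w : C) : unit_disk w -> (1 + w)%C <> 0%C.
Proof.
intros Hw E; apply (unit_disk_neq w (-1) Hw).
- rewrite Cmod_R, Rabs_left; lra.
- replace w with ((1 + w) - 1)%C by ring; rewrite E; ring.
Qed.

Ltac Cneq0 :=
  repeat match goal with |- _ /\ _ => split end;
  repeat apply Cmult_neq_0;
  first
  [ assumption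
  | now apply unit_disk_1_sub_neq0
  | now apply unit_disk_sub_1_neq0
  | now apply unit_disk_1_add_neq0
  | let E := fresh in intros E; apply RtoC_inj in E; lra ].

Lemma seg_int0_primitive (A a : C -> C) (z : C) :
  unit_disk z ->
  (forall w, unit_disk w -> is_Cderive A w (a w)) ->
  (forall w, unit_disk w -> ex_Cderive a w) ->
  seg_int0 a z = (A z - A 0)%C.
Proof.
intros Hz HA Ha; unfold seg_int0; apply (is_RInt_unique (V := C_R_CompleteNormedModule)).
replace (A z - A 0)%C with (A (RtoC 1 * z) - A (RtoC 0 * z))%C by (f_equal; f_equal; ring).
apply (is_RInt_derive (V := C_R_CompleteNormedModule) (fun t => A (RtoC t * z)%C));
  rewrite Rmin_left, Rmax_right by lra; intros t Ht;
  pose proof (unit_disk_scal z t Hz Ht) as Htz.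
- exact (is_derive_along_ray A z t _ (HA _ Htz)).
- apply (ex_derive_continuous (K := R_AbsRing) (V := C_R_NormedModule)).
  destruct (Ha _ Htz) as [da Hda].
  exists (da * z * z)%C.
  apply (is_derive_along_ray (fun w => a w * z)%C).
  eapply is_Cderive_eq; [auto_Cderive | ring].
Qed.

Lemma seg_int0_ext (a b : C -> C) (z : C) :
  unit_disk z -> (forall w, unit_disk w -> a w = b w) -> seg_int0 a z = seg_int0 b z.
Proof.
intros Hz Hab; unfold seg_int0; apply (RInt_ext (V := C_R_CompleteNormedModule)).
rewrite Rmin_left, Rmax_right by lra; intros t Ht.
now rewrite Hab by (apply unit_disk_scal; [exact Hz | lra]).
Qed.

Definition koebe (z : C) : C := (z / ((1 - z) * (1 - z)))%C.

Lemma is_Cderive_koebe (w : C) : (1 - w)%C <> 0%C -> is_Cderive koebe w ((1 + w) / (1 - w) ^ 3)%C.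
Proof. intros Hw; unfold koebe; eapply is_Cderive_eq; [auto_Cderive; Cneq0 | field; Cneq0]. Qed.

Section KoebeShear.

Variables (h g dh dg : C -> C).
Hypothesis shear : forall z, unit_disk z -> (h z - g z)%C = koebe z.

Lemma koebe_shear_deriv (w : C) :
  unit_disk w -> has_cderiv h w (dh w) -> has_cderiv g w (dg w) ->
  (dh w - dg w)%C = ((1 + w) / (1 - w) ^ 3)%C.
Proof.
intros Hw Hh%has_cderivE Hg%has_cderivE.
apply (is_Cderive_unique (fun y => h y - g y)%C w); [exact (is_Cderive_minus _ _ _ _ _ Hh Hg)|].
apply (is_derive_ext_loc (K := C_AbsRing) (V := AbsRing_NormedModule C_AbsRing) koebe).
- apply (filter_imp unit_disk); [|now apply unit_disk_locally].
  intros y Hy; symmetry; exact (shear y Hy).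
- apply is_Cderive_koebe; Cneq0.
Qed.

Lemma koebe_shear_dh (eps : R) (w : C) :
  (eps = 1 \/ eps = -1) -> unit_disk w ->
  has_cderiv h w (dh w) -> has_cderiv g w (dg w) -> dh w <> 0%C ->
  (dg w / dh w)%C = ((RtoC eps * w) * (RtoC eps * w))%C ->
  dh w = (/ (1 - w) ^ 4)%C.
Proof.
intros Heps Hw Hh Hg Hdh0 Hdil.
assert (Heps2 : (RtoC eps * RtoC eps)%C = 1%C) by (rewrite <- RtoC_mult; f_equal; destruct Heps; subst; ring).
assert (Hdg : dg w = (w * w * dh w)%C).
{ replace (dg w) with (dg w / dh w * dh w)%C by (field; exact Hdh0).
  rewrite Hdil.
  replace (RtoC eps * w * (RtoC eps * w) * dh w)%C with (RtoC eps * RtoC eps * (w * w * dh w))%C by ring.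
  rewrite Heps2; ring. }
pose proof (koebe_shear_deriv w Hw Hh Hg) as Hsub; rewrite Hdg in Hsub.
replace (dh w) with ((dh w - w * w * dh w) / ((1 - w) * (1 + w)))%C by (field; Cneq0).
rewrite Hsub; field; Cneq0.
Qed.

End KoebeShear.

Lemma primitive_inv_1_sub_pow4 (A : C -> C) (z : C) :
  unit_disk z -> (forall w, unit_disk w -> is_Cderive A w (/ (1 - w) ^ 4)%C) ->
  A z = (A 0 + / (3 * (1 - z) ^ 3) - / 3)%C.
Proof.
intros Hz HA.
set (a := fun w : C => (/ (1 - w) ^ 4)%C).
set (P := fun w : C => (/ (3 * (1 - w) ^ 3))%C).
assert (HP : forall w, unit_disk w -> is_Cderive P w (a w)).
{ intros w Hw; unfold P, a; eapply is_Cderive_eq; [auto_Cderive; Cneq0 | field; Cneq0]. }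
assert (Ha : forall w, unit_disk w -> ex_Cderive a w).
{ intros w Hw; eexists; unfold a; auto_Cderive; Cneq0. }
pose proof (seg_int0_primitive A a z Hz HA Ha) as EA.
rewrite (seg_int0_primitive P a z Hz HP Ha) in EA; unfold P in EA.
replace (A z) with (A z - A 0 + A 0)%C by ring; rewrite <- EA.
field; Cneq0.
Qed.

Definition height (w : C) : C := (1 / (w - 1) ^ 2 + 2 / (3 * (w - 1) ^ 3))%C.

Lemma Re_seg_int0_height (eps : R) (z : C) :
  unit_disk z ->
  Re (seg_int0 (fun t => 2 * Ci * (RtoC eps * t) / (1 - t) ^ 4)%C z) = eps * Im (height z).
Proof.
intros Hz.
set (a := fun t : C => (2 * Ci * (RtoC eps * t) / (1 - t) ^ 4)%C).
assert (HB : forall w, unit_disk w -> is_Cderive (fun w => - Ci * RtoC eps * height w)%C w (a w)).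
{ intros w Hw; unfold height, a; eapply is_Cderive_eq; [auto_Cderive; Cneq0 | field; Cneq0]. }
assert (Ha : forall w, unit_disk w -> ex_Cderive a w).
{ intros w Hw; eexists; unfold a; auto_Cderive; Cneq0. }
rewrite (seg_int0_primitive _ a z Hz HB Ha).
replace (height 0) with (/ 3)%C by (unfold height; field; Cneq0).
destruct (height z) as [u v].
unfold Re, Im, Ci, Cmult, Copp, Cminus, Cplus, Cinv, RtoC; simpl; field.
Qed.

Lemma Re_add_Cconj (a b : C) : Re (a + Cconj b) = Re (a + b).
Proof. destruct a, b; unfold Re, Cconj, Cplus; simpl; ring. Qed.

Lemma Im_add_Cconj (a b : C) : Im (a + Cconj b) = Im (a - b).
Proof. destruct a, b; unfold Im, Cconj, Cminus, Cplus, Copp; simpl; ring. Qed.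

Theorem theorem4p1 (L : C -> Prop) (h g dh dg : C -> C) (eps c : R) :
  single_slit_domain L ->
  in_SH0 h g dh dg ->
  (* f maps D onto L *)
  (forall w, L w <-> exists z, unit_disk z /\ w = (h z + Cconj (g z))%C) ->
  (forall z, unit_disk z -> (h z - g z)%C = (z / ((1 - z) * (1 - z)))%C) ->
  (eps = 1 \/ eps = -1) ->
  (* dilatation omega = g'/h' = b^2 with b(z) = eps z *)
  (forall z, unit_disk z -> (dg z / dh z)%C = ((RtoC eps * z) * (RtoC eps * z))%C) ->
  forall z, unit_disk z ->
    let f := (h z + Cconj (g z))%C in
    let F := Re (seg_int0 (fun t => (2 * Ci * (RtoC eps * t) * dh t)%C) z) + c in
    Re f = Re ((2 * z ^ 3 - 3 * z ^ 2 + 3 * z) / (3 * (1 - z) ^ 3))%C /\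
    Im f = Im (z / ((1 - z) ^ 2))%C /\
    F = eps * Im (1 / ((z - 1) ^ 2) + 2 / (3 * (z - 1) ^ 3))%C + c.
Proof.
intros _ [Hd [h0 [_ [_ [_ [Hnz _]]]]]] _ Hshear Heps Hdil z Hz; cbv zeta.
assert (Hdh : forall w, unit_disk w -> dh w = (/ (1 - w) ^ 4)%C).
{ intros w Hw; destruct (Hd w Hw) as [Hh Hg].
  exact (koebe_shear_dh h g dh dg Hshear eps w Heps Hw Hh Hg (proj1 (Hnz w Hw)) (Hdil w Hw)). }
assert (Hh : h z = (/ (3 * (1 - z) ^ 3) - / 3)%C).
{ rewrite (primitive_inv_1_sub_pow4 h z Hz), h0; [ring|].
  intros w Hw; rewrite <- Hdh by exact Hw; apply has_cderivE, Hd, Hw. }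
assert (Hg : g z = (h z - z / ((1 - z) * (1 - z)))%C) by (rewrite <- (Hshear z Hz); ring).
split; [|split].
- rewrite Re_add_Cconj, Hg, Hh; f_equal; field; Cneq0.
- rewrite Im_add_Cconj, (Hshear z Hz); f_equal; f_equal; ring.
- f_equal; etransitivity; [|exact (Re_seg_int0_height eps z Hz)]; f_equal.
  apply seg_int0_ext; [exact Hz|].
  intros w Hw; rewrite Hdh by exact Hw; field; Cneq0.
Qed.
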